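(* Let $X$ be a Banach lattice and $F\colon X^*\to\mathbb R\cup\{+\infty\}$ a proper, weak-$*$ lower semicontinuous function. If $F$ is substitutable, then it is convex.
   Context: Banach lattice: Banach space with lattice partial order ($\wedge,\vee$) compatible with addition and nonnegative scaling, with $|\phi_1|\leq|\phi_2|\Rightarrow\|\phi_1\|\leq\|\phi_2\|$. $X^*$ carries the dual order ($\mu\leq\nu$ iff $\langle\mu,\phi\rangle\leq\langle\nu,\phi\rangle$ for all $\phi\geq0$) and is a Banach lattice; $\mu^+=\mu\vee0$, $[a,b]=\{m:a\leq m\leq b\}$. $F$ is substitutable if for all $\mu_1,\mu_2\in X^*$ and every $t_{21}\in[0,(\mu_2-\mu_1)^+]$ there is $t_{12}\in[0,(\mu_1-\mu_2)^+]$ with $F(\mu_1+t_{21}-t_{12})+F(\mu_2-t_{21}+t_{12})\leq F(\mu_1)+F(\mu_2)$. *)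

From HB Require Import structures.
From mathcomp Require Import all_boot all_order all_algebra.
From mathcomp Require Import all_classical all_reals all_analysis.
Set Implicit Arguments. Unset Strict Implicit. Unset Printing Implicit Defensive.
Import Order.TTheory GRing.Theory Num.Theory.
Import numFieldNormedType.Exports.
Local Open Scope ring_scope.

Section BanachLatticeDefs.
Context {R : realType} {X : normedModType R}.

Definition vector_lattice (le : X -> X -> Prop) (meet join : X -> X -> X) : Prop :=
  (forall x, le x x) /\
  (forall x y, le x y -> le y x -> x = y) /\
  (forall x y z, le x y -> le y z -> le x z) /\
  (forall x y, le x (join x y) /\ le y (join x y) /\
     forall z, le x z -> le y z -> le (join x y) z) /\
  (forall x y, le (meet x y) x /\ le (meet x y) y /\
     forall z, le z x -> le z y -> le z (meet x y)) /\
  (forall x y z, le x y -> le (x + z) (y + z)) /\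
  (forall (a : R) x y, 0 <= a -> le x y -> le (a *: x) (a *: y)).

Definition lat_abs (join : X -> X -> X) (x : X) : X := join x (- x).

(* Banach lattice (completeness of X is imposed by its type in the theorem). *)
Definition banach_lattice (le : X -> X -> Prop) (meet join : X -> X -> X) : Prop :=
  vector_lattice le meet join /\
  (forall x y, le (lat_abs join x) (lat_abs join y) -> `|x| <= `|y|).

Definition is_dual (mu : X -> R) : Prop :=
  (forall (a : R) (x y : X), mu (a *: x + y) = a * mu x + mu y) /\ continuous mu.

Definition dual_le (le : X -> X -> Prop) (mu nu : X -> R) : Prop :=
  forall phi, le 0 phi -> mu phi <= nu phi.

Definition dual_pos_part (le : X -> X -> Prop) (mu p : X -> R) : Prop :=
  is_dual p /\ dual_le le mu p /\ dual_le le (fun=> 0) p /\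
  (forall m, is_dual m -> dual_le le mu m -> dual_le le (fun=> 0) m -> dual_le le p m).

Definition dual_proper (F : (X -> R) -> \bar R) : Prop :=
  (forall mu, is_dual mu -> F mu != -oo%E) /\
  (exists mu, is_dual mu /\ (F mu < +oo)%E).

(* weak-* lower semicontinuity on X^*, via basic weak-* neighbourhoods
   {nu : |nu(phi_i) - mu(phi_i)| < e, i = 1..n}. *)
Definition weakstar_lsc (F : (X -> R) -> \bar R) : Prop :=
  forall mu, is_dual mu -> forall c : R, (c%:E < F mu)%E ->
  exists (s : seq X) (e : R), 0 < e /\
    forall nu, is_dual nu -> (forall phi, phi \in s -> `|nu phi - mu phi| < e) ->
      (c%:E < F nu)%E.

Definition substitutable (le : X -> X -> Prop) (F : (X -> R) -> \bar R) : Prop :=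
  forall mu1 mu2, is_dual mu1 -> is_dual mu2 ->
  forall p q, dual_pos_part le (mu2 \- mu1) p -> dual_pos_part le (mu1 \- mu2) q ->
  forall t21, is_dual t21 -> dual_le le (fun=> 0) t21 -> dual_le le t21 p ->
  exists t12, is_dual t12 /\ dual_le le (fun=> 0) t12 /\ dual_le le t12 q /\
    (F (fun x => mu1 x + t21 x - t12 x)%R + F (fun x => mu2 x - t21 x + t12 x)%R
       <= F mu1 + F mu2)%E.

Definition dual_convex (F : (X -> R) -> \bar R) : Prop :=
  forall mu nu, is_dual mu -> is_dual nu -> forall t : R, 0 < t < 1 ->
    (F (fun x => t * mu x + (1 - t) * nu x)%R <= (t%:E * F mu + (1 - t)%R%:E * F nu)%E)%E.

End BanachLatticeDefs.

(* Midpoint convexity together with weak-* lower semicontinuity gives convexity,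
   through dyadic convex combinations.

   For midpoint convexity, write [mu1 = (s - e)/2] and [mu2 = (s + e)/2].  Applying
   substitutability with [t21 = e^+/2], where [e^+] is given by the Riesz--Kantorovich
   formula, replaces [e] by some [e'] with [|e'| <= e^-] without increasing
   [F mu1 + F mu2].  Along the iterates [e_n^-] decreases and [e_n^+ -> 0], so [e_n]
   converges weak-* to some [L <= 0].  By lower semicontinuity the pair [(s - L)/2],
   [(s + L)/2] still satisfies the bound, and as this pair is ordered, substitutability
   (now with [t12] forced to vanish) moves both functionals to the midpoint [s/2]. *)

From HB Require Import structures.
From mathcomp Require Import all_boot all_order all_algebra.
From mathcomp Require Import all_classical all_reals all_analysis.
From mathcomp Require Import ring lra zify.
Set Implicit Arguments. Unset Strict Implicit. Unset Printing Implicit Defensive.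
Import Order.TTheory GRing.Theory Num.Theory.
Import numFieldNormedType.Exports.
Local Open Scope ring_scope.
Local Open Scope classical_set_scope.

Lemma near_forall_in (T : Type) (G : set_system T) (I : eqType) (s : seq I)
    (P : I -> T -> Prop) : Filter G ->
  (forall i, i \in s -> \forall x \near G, P i x) ->
  \forall x \near G, forall i, i \in s -> P i x.
Proof.
move=> FG; elim: s => [_|i s IH Ps]; first by apply: nearW => x i; rewrite in_nil.
have Pi := Ps i (mem_head i s).
have {IH}Ps' : \forall x \near G, forall j, j \in s -> P j x.
  by apply: IH => j js; apply: Ps; rewrite in_cons js orbT.
near=> x => j; rewrite in_cons => /orP[/eqP -> | ]; first by near: x.
by move: j; near: x.
Unshelve. all: by end_near.
Qed.

Lemma ereal_addr_gt_split (R : realType) (s : R) (u v : \bar R) : u != -oo%E -> v != -oo%E ->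
  (s%:E < u + v)%E -> exists c1 c2 : R, [/\ (c1%:E < u)%E, (c2%:E < v)%E & s <= c1 + c2].
Proof.
case: u => [u| |] //; case: v => [v| |] //= _ _.
- rewrite lte_fin => suv; exists (u - (u + v - s) / 2), (v - (u + v - s) / 2).
  by split; rewrite ?lte_fin; lra.
- by move=> _; exists (u - 1), (s - u + 1); split; rewrite ?lte_fin ?ltry //; lra.
- by move=> _; exists (s - v + 1), (v - 1); split; rewrite ?lte_fin ?ltry //; lra.
- by move=> _; exists s, 0; split; rewrite ?ltry //; lra.
Qed.

Lemma ereal_gt_dense (R : realType) (r : R) (u : \bar R) :
  (r%:E < u)%E -> exists2 c : R, r < c & (c%:E < u)%E.
Proof.
case: u => [u| |] //; last by exists (r + 1); rewrite ?ltry //; lra.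
by rewrite lte_fin => ru; exists ((r + u) / 2); rewrite ?lte_fin; lra.
Qed.

Lemma dyadic_approx (R : realType) (t : R) : 0 <= t <= 1 ->
  exists2 k : nat -> nat, (forall n, k n <= 2 ^ n)%N & (k n)%:R / 2 ^+ n @[n --> \oo] --> t.
Proof.
move=> /andP[t0 t1]; exists (fun n => Num.truncn (t * 2 ^+ n)) => [n|].
  have tN : t * 2 ^+ n <= (2 ^ n)%:R by rewrite natrX ler_piMl // ltW.
  by rewrite truncn_le_nat (le_lt_trans tN) // ltr_nat.
apply: (@squeeze_cvgr _ _ _ _ (fun n => t - (2^-1) ^+ n) (fun=> t)); last exact: cvg_cst.
  apply: nearW => n; have N0 : (0 : R) < 2 ^+ n by rewrite exprn_gt0.
  have /andP[kt tk] := truncn_itv (mulr_ge0 t0 (ltW N0)).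
  rewrite -[(Num.truncn _).+1%:R]natr1 in tk.
  rewrite exprVn ler_pdivlMr // ler_pdivrMr // mulrBl mulVf ?gt_eqF //.
  by apply/andP; split; lra.
rewrite -[X in _ --> X]subr0; apply: cvgB; first exact: cvg_cst.
by apply: cvg_expr; rewrite gtr0_norm ?invf_lt1 ?ltr1n.
Qed.

Lemma shrinking_pair_cvg (R : realType) (p q : nat -> R) :
    (forall n, 0 <= p n) -> (forall n, 0 <= q n) -> (forall n, p n.+1 + q n.+1 <= q n) ->
  [/\ cvgn q, p n @[n --> \oo] --> 0 & forall n, p n + q n <= p 0%N + q 0%N].
Proof.
move=> p0 q0 pq; have q_dec n : q n.+1 <= q n by have := pq n; have := p0 n.+1; lra.
have cvg_q : cvgn q.
  apply: nonincreasing_is_cvgn; first exact/nonincreasing_seqP.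
  by exists 0 => _ [n _ <-].
split=> //; last by elim=> // n IH; apply: le_trans IH; have := pq n; have := p0 n; lra.
rewrite -cvg_shiftS; apply: (@squeeze_cvgr _ _ _ _ (fun=> 0) (fun n => q n - q n.+1)).
- by apply: nearW => n; rewrite p0 /=; have := pq n; have := q0 n.+1; lra.
- exact: cvg_cst.
rewrite -(subrr (limn q)); apply: cvgB => //.
by rewrite (cvg_shiftS q).
Qed.

Section DualFunctional.
Variables (R : realType) (X : normedModType R).
Implicit Types (mu nu : X -> R) (x y : X).

Lemma dualD mu x y : is_dual mu -> mu (x + y) = mu x + mu y.
Proof. by case=> lin _; have := lin 1 x y; rewrite scale1r mul1r. Qed.

Lemma dual0 mu : is_dual mu -> mu 0 = 0.
Proof. by move=> hmu; have := dualD 0 0 hmu; rewrite addr0; lra. Qed.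

Lemma dualZ mu a x : is_dual mu -> mu (a *: x) = a * mu x.
Proof. by move=> hmu; case: (hmu) => lin _; rewrite -[a *: x]addr0 lin dual0 ?addr0. Qed.

Lemma dualN mu x : is_dual mu -> mu (- x) = - mu x.
Proof. by move=> hmu; rewrite -scaleN1r dualZ // mulN1r. Qed.

Lemma dualB mu x y : is_dual mu -> mu (x - y) = mu x - mu y.
Proof. by move=> hmu; rewrite dualD // dualN. Qed.

(* Packaging [mu] as a [{linear}] map gives access to the library's equivalence
   between continuity and boundedness of linear maps. *)
Let linear_of mu (lin : forall a x y, mu (a *: x + y) = a * mu x + mu y) :
  {linear X -> R^o} := HB.pack mu (GRing.isLinear.Build R X R^o _ mu lin).

Lemma is_dual_bound mu : is_dual mu -> exists2 C, 0 < C & forall x, `|mu x| <= C * `|x|.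
Proof.
case=> lin cont; apply: pinfty_ex_gt0; apply/(linear_boundedP (linear_of lin)).
by apply/linear_bounded_continuous.
Qed.

Lemma bounded_is_dual mu C : (forall a x y, mu (a *: x + y) = a * mu x + mu y) ->
  (forall x, `|mu x| <= C * `|x|) -> is_dual mu.
Proof.
move=> lin muC; split => //; apply/(linear_bounded_continuous (linear_of lin)).
apply/linear_boundedP; near=> r => x; apply: le_trans (muC x) _.
by apply: ler_wpM2r => //; near: r; apply: nbhs_pinfty_ge; rewrite num_real.
Unshelve. all: by end_near.
Qed.

Lemma is_dual_comb mu nu a b : is_dual mu -> is_dual nu ->
  is_dual (fun x => a * mu x + b * nu x).
Proof.
move=> hmu hnu; split=> [c x y|x]; first by rewrite !dualD ?dualZ //; ring.
by apply: cvgD; apply: cvgMl_tmp; [exact: (proj2 hmu) | exact: (proj2 hnu)].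
Qed.

Lemma eq_is_dual mu nu : mu =1 nu -> is_dual mu -> is_dual nu.
Proof. by move=> /funext <-. Qed.

Lemma is_dualN mu : is_dual mu -> is_dual (\- mu).
Proof. by move=> hmu; apply: eq_is_dual (is_dual_comb (-1) 0 hmu hmu) => x /=; ring. Qed.

Lemma is_dual_cvg (mu_ : nat -> X -> R) nu C : (forall n, is_dual (mu_ n)) ->
  (forall n x, `|mu_ n x| <= C * `|x|) -> (forall x, mu_ n x @[n --> \oo] --> nu x) ->
  is_dual nu.
Proof.
move=> hmu muC cvmu; apply: (@bounded_is_dual _ C) => [a x y|x].
  apply: (cvg_unique (@norm_hausdorff _ _) (cvmu (a *: x + y))) => /=.
  have -> : (fun n => mu_ n (a *: x + y)) = (fun n => a * mu_ n x + mu_ n y).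
    by apply: funext => n; case: (hmu n) => lin _; apply: lin.
  by apply: cvgD; [apply: cvgMl_tmp|]; apply: cvmu.
have muxC : \forall n \near \oo, `|mu_ n x| <= C * `|x| by exact: nearW.
by apply: (closed_cvg _ (@closed_le _ (C * `|x|)) muxC); apply: cvg_norm.
Qed.

End DualFunctional.

Section WeakStarLsc.
Variables (R : realType) (X : normedModType R).
Variable F : (X -> R) -> \bar R.
Hypothesis Hprop : dual_proper F.
Hypothesis Hlsc : weakstar_lsc F.

Lemma weakstar_lsc_cvg (mu_ : nat -> X -> R) mu (c : R) :
    (forall n, is_dual (mu_ n)) -> is_dual mu ->
    (forall x, mu_ n x @[n --> \oo] --> mu x) -> (c%:E < F mu)%E ->
  \forall n \near \oo, (c%:E < F (mu_ n))%E.
Proof.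
move=> hmu_ hmu cvmu cF; have [s [e [e0 near_mu]]] := Hlsc hmu cF.
have close : \forall n \near \oo, forall x, x \in s -> `|mu_ n x - mu x| < e.
  apply: near_forall_in => x _; near=> n; rewrite distrC; near: n.
  exact: (cvgrPdist_lt _ _).1 (cvmu x) _ e0.
by near=> n; apply: near_mu => //; near: n.
Unshelve. all: by end_near.
Qed.

Lemma weakstar_lsc_addF_le (a_ b_ : nat -> X -> R) a b (S : \bar R) :
    (forall n, is_dual (a_ n)) -> (forall n, is_dual (b_ n)) -> is_dual a -> is_dual b ->
    (forall x, a_ n x @[n --> \oo] --> a x) -> (forall x, b_ n x @[n --> \oo] --> b x) ->
    (forall n, (F (a_ n) + F (b_ n) <= S)%E) ->
  (F a + F b <= S)%E.
Proof.
move=> ha_ hb_ ha hb cva cvb FS; have [FNy _] := Hprop.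
case: S FS => [s| |] FS; [|by rewrite leey|].
- rewrite leNgt; apply/negP => /(ereal_addr_gt_split (FNy _ ha) (FNy _ hb)).
  move=> [c1 [c2 [c1a c2b s_le]]].
  have [n [c1an c2bn]] := filter_ex (filterI (weakstar_lsc_cvg ha_ ha cva c1a)
                                             (weakstar_lsc_cvg hb_ hb cvb c2b)).
  by have := lt_le_trans (lteD c1an c2bn) (FS n); rewrite -EFinD lte_fin; lra.
- have := FS 0%N; rewrite leeNy_eq => /eqP.
  by have := FNy _ (ha_ 0%N); have := FNy _ (hb_ 0%N); case: (F (a_ 0%N)); case: (F (b_ 0%N)).
Qed.

End WeakStarLsc.

Section MidpointConvexity.
Variables (R : realType) (X : normedModType R).
Variable F : (X -> R) -> \bar R.
Hypothesis Hprop : dual_proper F.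
Hypothesis Hlsc : weakstar_lsc F.
Hypothesis Hmid : forall mu nu, is_dual mu -> is_dual nu ->
  (F (fun x => (mu x + nu x) / 2)%R + F (fun x => (mu x + nu x) / 2)%R <= F mu + F nu)%E.

Section Segment.
Variables (mu nu : X -> R) (a b : R).
Hypotheses (hmu : is_dual mu) (hnu : is_dual nu).
Hypotheses (Fmu : F mu = a%:E) (Fnu : F nu = b%:E).

Let seg (s : R) x := s * mu x + (1 - s) * nu x.
Let chord (s : R) := s * a + (1 - s) * b.

Let is_dual_seg s : is_dual (seg s).
Proof. exact: is_dual_comb. Qed.

Let midpoint_convex_seg s1 s2 c1 c2 :
    (F (seg s1) <= c1%:E)%E -> (F (seg s2) <= c2%:E)%E ->
  (F (seg ((s1 + s2) / 2)) <= ((c1 + c2) / 2)%:E)%E.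
Proof.
move=> Fc1 Fc2; have segE : seg ((s1 + s2) / 2) = fun x => (seg s1 x + seg s2 x) / 2.
  by apply: funext => x; rewrite /seg; field.
have := le_trans (Hmid (is_dual_seg s1) (is_dual_seg s2)) (leeD Fc1 Fc2).
rewrite -segE; have := (proj1 Hprop) _ (is_dual_seg ((s1 + s2) / 2)).
by case: (F _) => [r| |] //= _; rewrite -EFinD !lee_fin; lra.
Qed.

Let dyadic_convex n k : (k <= 2 ^ n)%N ->
  (F (seg (k%:R / 2 ^+ n)) <= (chord (k%:R / 2 ^+ n))%:E)%E.
Proof.
elim: n k => [|n IH] k.
  rewrite expn0 expr0 divr1 leq_eqVlt ltnS leqn0 => /orP[]/eqP ->.
    have -> : seg 1%:R = mu by apply: funext => x; rewrite /seg; ring.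
    by rewrite Fmu /chord lee_fin; lra.
  have -> : seg 0%:R = nu by apply: funext => x; rewrite /seg; ring.
  by rewrite Fnu /chord lee_fin; lra.
have N0 : (2 ^+ n : R) != 0 by rewrite expf_neq0.
rewrite -[k]odd_double_half expnS; case: (odd k) => /= hk.
  have j_le : (k./2.+1 <= 2 ^ n)%N by lia.
  have kE : ((1 + k./2.*2)%:R / 2 ^+ n.+1 : R) =
      (k./2%:R / 2 ^+ n + k./2.+1%:R / 2 ^+ n) / 2.
    by rewrite natrD -muln2 natrM -[k./2.+1]addn1 natrD exprS; field.
  rewrite kE; have := midpoint_convex_seg (IH _ (ltnW j_le)) (IH _ j_le).
  by congr (_ <= _)%E; rewrite /chord; congr (_%:E); field.
have kE : ((0 + k./2.*2)%:R / 2 ^+ n.+1 : R) = k./2%:R / 2 ^+ n.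
  by rewrite add0n exprS -mul2n natrM; field.
by rewrite kE; apply: IH; lia.
Qed.

Lemma segment_convex t : 0 <= t <= 1 -> (F (seg t) <= (chord t)%:E)%E.
Proof.
move=> t01; have [k k_le s_cvg] := dyadic_approx t01.
pose s_ n := (k n)%:R / 2 ^+ n : R.
have seg_cvg x : seg (s_ n) x @[n --> \oo] --> seg t x.
  by apply: cvgD; apply: cvgMr_tmp => //; apply: cvgB => //; exact: cvg_cst.
have chord_cvg : chord (s_ n) @[n --> \oo] --> chord t.
  by apply: cvgD; apply: cvgMr_tmp => //; apply: cvgB => //; exact: cvg_cst.
rewrite leNgt; apply/negP => /ereal_gt_dense[c tc cF].
have gap : 0 < c - chord t by rewrite subr_gt0.
have [n [cFn chord_n]] := filter_ex (filterI
  (weakstar_lsc_cvg Hlsc (fun n => is_dual_seg (s_ n)) (is_dual_seg t) seg_cvg cF)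
  ((cvgrPdist_lt _ _).1 chord_cvg _ gap)).
have := lt_le_trans cFn (dyadic_convex (k_le n)); rewrite lte_fin.
by move: chord_n; rewrite ltr_norml => /andP[]; lra.
Qed.

End Segment.

Lemma midpoint_convex_lsc : dual_convex F.
Proof.
move=> mu nu hmu hnu t /andP[t0 t1]; have [FNy _] := Hprop.
have t'0 : 0 < 1 - t by rewrite subr_gt0.
case Fmu: (F mu) (FNy _ hmu) => [a| |] // _; case Fnu: (F nu) (FNy _ hnu) => [b| |] // _.
- rewrite -!EFinM -EFinD; apply: segment_convex => //.
  by rewrite !ltW.
- by rewrite gt0_muley ?lte_fin // -EFinM addey // leey.
- by rewrite gt0_muley ?lte_fin // -EFinM addye // leey.
- by rewrite !gt0_muley ?lte_fin // addye // leey.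
Qed.

End MidpointConvexity.

Section BanachLattice.
Variables (R : realType) (X : normedModType R).
Variables (le : X -> X -> Prop) (meet join : X -> X -> X).
Hypothesis Hvl : vector_lattice le meet join.
Hypothesis Hnorm : forall x y, le (lat_abs join x) (lat_abs join y) -> `|x| <= `|y|.

Lemma lat_refl x : le x x.
Proof. by case: Hvl => refl _; apply: refl. Qed.

Lemma lat_anti x y : le x y -> le y x -> x = y.
Proof. by case: Hvl => _ [anti _]; apply: anti. Qed.

Lemma lat_trans y x z : le x y -> le y z -> le x z.
Proof. by case: Hvl => _ [_ [trans _]]; apply: trans. Qed.

Lemma lat_leUl x y : le x (join x y).
Proof. by case: Hvl => _ [_ [_ [/(_ x y)[ubl _] _]]]. Qed.

Lemma lat_leUr x y : le y (join x y).
Proof. by case: Hvl => _ [_ [_ [/(_ x y)[_ [ubr _]] _]]]. Qed.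

Lemma lat_leUx x y z : le x z -> le y z -> le (join x y) z.
Proof. by case: Hvl => _ [_ [_ [/(_ x y)[_ [_ lub]] _]]]; apply: lub. Qed.

Lemma lat_leIl x y : le (meet x y) x.
Proof. by case: Hvl => _ [_ [_ [_ [/(_ x y)[lbl _] _]]]]. Qed.

Lemma lat_leIr x y : le (meet x y) y.
Proof. by case: Hvl => _ [_ [_ [_ [/(_ x y)[_ [lbr _]] _]]]]. Qed.

Lemma lat_lexI x y z : le z x -> le z y -> le z (meet x y).
Proof. by case: Hvl => _ [_ [_ [_ [/(_ x y)[_ [_ glb]] _]]]]; apply: glb. Qed.

Lemma lat_leD2r z x y : le x y -> le (x + z) (y + z).
Proof. by case: Hvl => _ [_ [_ [_ [_ [add _]]]]]; apply: add. Qed.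

Lemma lat_leZ2l (a : R) x y : 0 <= a -> le x y -> le (a *: x) (a *: y).
Proof. by case: Hvl => _ [_ [_ [_ [_ [_ scale]]]]]; apply: scale. Qed.

Lemma lat_leD2l z x y : le x y -> le (z + x) (z + y).
Proof. by rewrite ![z + _]addrC; apply: lat_leD2r. Qed.

Lemma lat_leD x y z t : le x y -> le z t -> le (x + z) (y + t).
Proof. by move=> /(lat_leD2r z) + /(lat_leD2l y); apply: lat_trans. Qed.

Lemma lat_subr_ge0 x y : le 0 (y - x) <-> le x y.
Proof.
split=> [/(lat_leD2r x)|/(lat_leD2r (- x))]; first by rewrite add0r subrK.
by rewrite subrr.
Qed.

Lemma lat_oppr_le0 x : le 0 x -> le (- x) 0.
Proof. by move=> /(lat_leD2r (- x)); rewrite add0r subrr. Qed.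

Lemma lat_addr_ge0 x y : le 0 x -> le 0 y -> le 0 (x + y).
Proof. by move=> hx /(lat_leD hx); rewrite addr0. Qed.

Lemma lat_scaler_ge0 (a : R) x : 0 <= a -> le 0 x -> le 0 (a *: x).
Proof. by move=> ha /(lat_leZ2l ha); rewrite scaler0. Qed.

Lemma lat_joinC x y : join x y = join y x.
Proof.
by apply: lat_anti; apply: lat_leUx;
  [exact: lat_leUr | exact: lat_leUl | exact: lat_leUr | exact: lat_leUl].
Qed.

Lemma lat_joinDr z x y : join (x + z) (y + z) = join x y + z.
Proof.
have joinD_le u v w : le (join (u + w) (v + w)) (join u v + w).
  by apply: lat_leUx; apply: lat_leD2r; [exact: lat_leUl | exact: lat_leUr].
apply: lat_anti; first exact: joinD_le.
by have := joinD_le (x + z) (y + z) (- z); rewrite !addrK => /(lat_leD2r z); rewrite subrK.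
Qed.

Definition lat_pos x := join x 0.
Definition lat_neg x := join (- x) 0.

Lemma lat_pos_ge0 x : le 0 (lat_pos x).
Proof. exact: lat_leUr. Qed.

Lemma lat_neg_ge0 x : le 0 (lat_neg x).
Proof. exact: lat_leUr. Qed.

Lemma lat_negE x : lat_neg x = lat_pos x - x.
Proof. by rewrite /lat_neg /lat_pos -lat_joinDr add0r subrr lat_joinC. Qed.

Lemma lat_pos_negE x : x = lat_pos x - lat_neg x.
Proof. by rewrite lat_negE opprB addrC subrK. Qed.

Definition lat_itv0 u := [set y | le 0 y /\ le y u].

Lemma lat_abs_ge0 x : le 0 (lat_abs join x).
Proof.
have := lat_leD (lat_leUl x (- x)) (lat_leUr x (- x)).
rewrite subrr -mulr2n -scaler_nat => /(lat_leZ2l (a := 2^-1)).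
by rewrite scaler0 scalerA mulVf ?pnatr_eq0 // scale1r; apply; rewrite invr_ge0.
Qed.

Lemma lat_abs_id x : le 0 x -> lat_abs join x = x.
Proof.
move=> hx; apply: lat_anti; last exact: lat_leUl.
by apply: lat_leUx; [exact: lat_refl | exact: lat_trans (lat_oppr_le0 hx) hx].
Qed.

Lemma riesz_decomposition y u w : le 0 y -> le 0 u -> le 0 w -> le y (u + w) ->
  exists y1 y2, [/\ y = y1 + y2, le 0 y1, le y1 u, le 0 y2 & le y2 w].
Proof.
move=> hy hu hw hyuw; exists (meet y u), (y - meet y u); split.
- by rewrite addrC subrK.
- exact: lat_lexI.
- exact: lat_leIr.
- exact/lat_subr_ge0/lat_leIl.
have : le (y - w) (meet y u).
  apply: lat_lexI; first by move: (lat_leD2l y (lat_oppr_le0 hw)); rewrite addr0.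
  by move/(lat_leD2r (- w)): hyuw; rewrite addrK.
by move/(lat_leD2r (w - meet y u)); rewrite addrA subrK [meet y u + _]addrC subrK.
Qed.

Lemma lat_norm_le x y : le 0 x -> le x y -> `|x| <= `|y|.
Proof. by move=> hx hxy; apply: Hnorm; rewrite !lat_abs_id //; exact: lat_trans hxy. Qed.

Lemma lat_norm_pos x : `|lat_pos x| <= `|x|.
Proof.
apply: Hnorm; rewrite lat_abs_id; last exact: lat_pos_ge0.
by apply: lat_leUx; [exact: lat_leUl | exact: lat_abs_ge0].
Qed.

Lemma lat_norm_neg x : `|lat_neg x| <= `|x|.
Proof.
apply: Hnorm; rewrite lat_abs_id; last exact: lat_neg_ge0.
rewrite lat_negE -(addrK x (lat_abs join x)); apply: lat_leD2r; apply: lat_leUx.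
  by move: (lat_leD2r x (lat_abs_ge0 x)); rewrite add0r.
by move: (lat_leD2r x (lat_leUr x (- x))); rewrite addNr.
Qed.

Lemma lat_decomp_norm_le (f : X -> R) C : 0 <= C ->
    (forall u, le 0 u -> `|f u| <= C * `|u|) ->
  forall x, `|f (lat_pos x) - f (lat_neg x)| <= 2 * C * `|x|.
Proof.
move=> C0 fC x; apply: le_trans (ler_normB _ _) _.
have := ler_wpM2l C0 (lat_norm_pos x).
have := ler_wpM2l C0 (lat_norm_neg x).
have := fC _ (lat_pos_ge0 x); have := fC _ (lat_neg_ge0 x).
lra.
Qed.

Lemma dual_cone_eq0 (mu : X -> R) : is_dual mu ->
  (forall u, le 0 u -> mu u = 0) -> forall x, mu x = 0.
Proof.
move=> hmu mu0 x; rewrite (lat_pos_negE x) dualB //.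
by rewrite (mu0 _ (lat_pos_ge0 x)) (mu0 _ (lat_neg_ge0 x)) subrr.
Qed.

Definition dual_pos_cone (d : X -> R) (u : X) : R := sup (d @` lat_itv0 u).

(* The Riesz--Kantorovich formula: [d^+ u = sup {d y | 0 <= y <= u}] for [u >= 0],
   extended to all of [X] through [x = x^+ - x^-]. *)
Definition dual_pos (d : X -> R) (x : X) : R :=
  dual_pos_cone d (lat_pos x) - dual_pos_cone d (lat_neg x).

Section Cone.
Variable d : X -> R.
Hypothesis hd : is_dual d.

Let image_itv0_0 u : le 0 u -> (d @` lat_itv0 u) 0.
Proof. by move=> u0; exists 0; [split => //; exact: lat_refl | exact: dual0]. Qed.

Let itv0_bound : exists2 C, 0 <= C & forall u y, le 0 y -> le y u -> d y <= C * `|u|.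
Proof.
have [C C0 dC] := is_dual_bound hd; exists C => [|u y y0 yu]; first exact: ltW.
apply: le_trans (ler_norm _) _; apply: le_trans (dC y) _.
by apply: ler_wpM2l; [exact: ltW | exact: lat_norm_le].
Qed.

Lemma dual_pos_cone_ub u y : le 0 y -> le y u -> d y <= dual_pos_cone d u.
Proof.
move=> y0 yu; apply: sup_upper_bound; last by exists y.
split; first by exists 0; apply/image_itv0_0/(lat_trans y0).
by have [C _ dC] := itv0_bound; exists (C * `|u|) => _ [z [z0 zu] <-]; apply: dC.
Qed.

Lemma dual_pos_cone_least u c : le 0 u ->
  (forall y, le 0 y -> le y u -> d y <= c) -> dual_pos_cone d u <= c.
Proof.
move=> u0 dc; apply: ge_sup; first by exists 0; apply: image_itv0_0.
by move=> _ [y [y0 yu] <-]; apply: dc.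
Qed.

Lemma dual_pos_cone_ge0 u : le 0 u -> 0 <= dual_pos_cone d u.
Proof. by move=> u0; rewrite -(dual0 hd); apply: dual_pos_cone_ub => //; exact: lat_refl. Qed.

Lemma dual_pos_cone_ge u : le 0 u -> d u <= dual_pos_cone d u.
Proof. by move=> u0; apply: dual_pos_cone_ub => //; exact: lat_refl. Qed.

Lemma dual_pos_cone_bound : exists2 C, 0 <= C &
  forall u, le 0 u -> `|dual_pos_cone d u| <= C * `|u|.
Proof.
have [C C0 dC] := itv0_bound; exists C => // u u0.
by rewrite ger0_norm ?dual_pos_cone_ge0 //; apply: dual_pos_cone_least => // y; apply: dC.
Qed.

Lemma dual_pos_coneD u w : le 0 u -> le 0 w ->
  dual_pos_cone d (u + w) = dual_pos_cone d u + dual_pos_cone d w.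
Proof.
move=> u0 w0; have uw0 := lat_addr_ge0 u0 w0.
apply/eqP; rewrite eq_le; apply/andP; split.
  apply: dual_pos_cone_least => // y y0 yuw.
  have [y1 [y2 [-> y10 y1u y20 y2w]]] := riesz_decomposition y0 u0 w0 yuw.
  by rewrite dualD //; apply: lerD; apply: dual_pos_cone_ub.
rewrite -lerBrDr; apply: dual_pos_cone_least => // y1 y10 y1u.
rewrite lerBrDr addrC -lerBrDr; apply: dual_pos_cone_least => // y2 y20 y2w.
rewrite lerBrDr addrC -dualD //; apply: dual_pos_cone_ub.
  exact: lat_addr_ge0.
exact: lat_leD.
Qed.

Lemma dual_pos_coneZ_le (a : R) u : 0 < a -> le 0 u ->
  dual_pos_cone d (a *: u) <= a * dual_pos_cone d u.
Proof.
move=> a0 u0; have a'0 : 0 <= a^-1 by rewrite invr_ge0 ltW.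
apply: dual_pos_cone_least => [|y y0 yau]; first exact: lat_scaler_ge0 (ltW a0) u0.
rewrite -[y](scalerKV (lt0r_neq0 a0)) dualZ // ler_pM2l //.
apply: dual_pos_cone_ub; first exact: lat_scaler_ge0.
by move: (lat_leZ2l a'0 yau); rewrite scalerA mulVf ?gt_eqF // scale1r.
Qed.

Lemma dual_pos_cone0 : dual_pos_cone d 0 = 0.
Proof.
apply/eqP; rewrite eq_le dual_pos_cone_ge0 ?andbT; last exact: lat_refl.
apply: dual_pos_cone_least => [|y y0 y_le0]; first exact: lat_refl.
by rewrite (lat_anti y_le0 y0) dual0.
Qed.

Lemma dual_pos_coneZ (a : R) u : 0 <= a -> le 0 u ->
  dual_pos_cone d (a *: u) = a * dual_pos_cone d u.
Proof.
rewrite le0r => /orP[/eqP -> | a0] u0; first by rewrite scale0r dual_pos_cone0 mul0r.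
apply/eqP; rewrite eq_le dual_pos_coneZ_le //=.
rewrite -ler_pdivlMl // -[X in dual_pos_cone d X](scalerK (lt0r_neq0 a0)).
by apply: dual_pos_coneZ_le; [rewrite invr_gt0 | exact: lat_scaler_ge0 (ltW a0) u0].
Qed.

End Cone.

Lemma dual_pos_coneN d u : is_dual d -> le 0 u ->
  dual_pos_cone (\- d) u = dual_pos_cone d u - d u.
Proof.
have le_dual_pos_coneN d' : is_dual d' -> le 0 u ->
    dual_pos_cone (\- d') u <= dual_pos_cone d' u - d' u.
  move=> hd' u0; apply: (dual_pos_cone_least (is_dualN hd') u0) => y y0 yu /=.
  have -> : - d' y = d' (u - y) - d' u by rewrite dualB //; ring.
  rewrite lerD2r.
  apply: (dual_pos_cone_ub hd'); first exact/lat_subr_ge0.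
  by move: (lat_leD2l u (lat_oppr_le0 y0)); rewrite addr0.
move=> hd u0; apply/eqP; rewrite eq_le le_dual_pos_coneN //=.
have := le_dual_pos_coneN _ (is_dualN hd) u0.
have -> : \- (\- d) = d by apply: funext => x /=; rewrite opprK.
by rewrite /=; lra.
Qed.

Section PositivePart.
Variable d : X -> R.
Hypothesis hd : is_dual d.

Lemma dual_pos_decomp x u w : le 0 u -> le 0 w -> x = u - w ->
  dual_pos d x = dual_pos_cone d u - dual_pos_cone d w.
Proof.
move=> u0 w0 xE; have x_pos_w : lat_pos x + w = u + lat_neg x.
  by rewrite lat_negE; set p := lat_pos x; rewrite xE opprB addrCA [u + _]addrCA subrr addr0.
have := congr1 (dual_pos_cone d) x_pos_w.
have p0 := lat_pos_ge0 x; have n0 := lat_neg_ge0 x.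
by rewrite (dual_pos_coneD hd p0 w0) (dual_pos_coneD hd u0 n0) /dual_pos; lra.
Qed.

Lemma dual_pos_coneE u : le 0 u -> dual_pos d u = dual_pos_cone d u.
Proof.
move=> u0; rewrite (dual_pos_decomp u0 (lat_refl 0) (esym (subr0 u))).
by rewrite dual_pos_cone0 // subr0.
Qed.

Lemma dual_posD x y : dual_pos d (x + y) = dual_pos d x + dual_pos d y.
Proof.
have [px py] := (lat_pos_ge0 x, lat_pos_ge0 y).
have [nx ny] := (lat_neg_ge0 x, lat_neg_ge0 y).
rewrite (@dual_pos_decomp _ (lat_pos x + lat_pos y) (lat_neg x + lat_neg y));
  try exact: lat_addr_ge0.
  by rewrite !dual_pos_coneD // /dual_pos; lra.
by rewrite {1}(lat_pos_negE x) {1}(lat_pos_negE y) opprD addrACA.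
Qed.

Lemma dual_posZ (a : R) x : 0 <= a -> dual_pos d (a *: x) = a * dual_pos d x.
Proof.
move=> a0; have [px nx] := (lat_pos_ge0 x, lat_neg_ge0 x).
rewrite (@dual_pos_decomp _ (a *: lat_pos x) (a *: lat_neg x)); try exact: lat_scaler_ge0.
  by rewrite !dual_pos_coneZ // /dual_pos; lra.
by rewrite {1}(lat_pos_negE x) scalerBr.
Qed.

Lemma dual_posN x : dual_pos d (- x) = - dual_pos d x.
Proof.
have [px nx] := (lat_pos_ge0 x, lat_neg_ge0 x).
rewrite (@dual_pos_decomp _ (lat_neg x) (lat_pos x)) //; first by rewrite /dual_pos opprB.
by rewrite {1}(lat_pos_negE x) opprB.
Qed.

Lemma is_dual_pos : is_dual (dual_pos d).
Proof.
have [C C0 PC] := dual_pos_cone_bound hd.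
apply: (bounded_is_dual (C := 2 * C)) => [a x y|]; last exact: lat_decomp_norm_le.
rewrite dual_posD; congr (_ + _); have [a0|a0] := leP 0 a; first exact: dual_posZ.
by rewrite -[a]opprK scaleNr dual_posN dual_posZ ?mulNr // oppr_ge0 ltW.
Qed.

Lemma dual_pos_partP : dual_pos_part le d (dual_pos d).
Proof.
split; first exact: is_dual_pos.
split; first by move=> u u0; rewrite dual_pos_coneE // dual_pos_cone_ge.
split; first by move=> u u0; rewrite dual_pos_coneE // dual_pos_cone_ge0.
move=> m hm dm m0 u u0; rewrite dual_pos_coneE //.
apply: dual_pos_cone_least => // y y0 yu; apply: le_trans (dm _ y0) _.
have := m0 (u - y) (proj2 (lat_subr_ge0 _ _) yu); rewrite dualB //; lra.
Qed.

End PositivePart.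

Lemma dual_pos_subN d x : is_dual d -> dual_pos d x - dual_pos (\- d) x = d x.
Proof.
move=> hd; have [px nx] := (lat_pos_ge0 x, lat_neg_ge0 x).
have := congr1 d (lat_pos_negE x); rewrite dualB // => dx.
by rewrite /dual_pos !dual_pos_coneN //; lra.
Qed.

Lemma dual_pos_abs_le z q u : is_dual z -> is_dual q ->
    (forall y, le 0 y -> - q y <= z y <= q y) -> le 0 u ->
  dual_pos z u + dual_pos (\- z) u <= q u.
Proof.
move=> hz hq zq u0; have hnz := is_dualN hz.
rewrite (dual_pos_coneE hz u0) (dual_pos_coneE hnz u0) dual_pos_coneN //.
suff : dual_pos_cone z u <= (q u + z u) / 2 by lra.
apply: dual_pos_cone_least => // y y0 yu.
have uy0 : le 0 (u - y) by apply/lat_subr_ge0.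
have /andP[_ zqy] := zq y y0; have /andP[zqu _] := zq (u - y) uy0.
by move: zqu; rewrite [q _]dualB // [z _]dualB //; lra.
Qed.

Lemma shrinking_duals_cvg (e_ : nat -> X -> R) : (forall n, is_dual (e_ n)) ->
    (forall n u, le 0 u ->
      dual_pos (e_ n.+1) u + dual_pos (\- e_ n.+1) u <= dual_pos (\- e_ n) u) ->
  exists2 L, is_dual L /\ dual_le le L (fun=> 0) & forall x, e_ n x @[n --> \oo] --> L x.
Proof.
move=> he shrink.
pose p n := dual_pos (e_ n); pose q n := dual_pos (\- e_ n).
have p_ge0 n u : le 0 u -> 0 <= p n u := (dual_pos_partP (he n)).2.2.1 u.
have q_ge0 n u : le 0 u -> 0 <= q n u := (dual_pos_partP (is_dualN (he n))).2.2.1 u.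
have pq_cvg u (u0 : le 0 u) := shrinking_pair_cvg
  (fun n => p_ge0 n u u0) (fun n => q_ge0 n u u0) (fun n => shrink n u u0).
have eE n x : e_ n x = p n x - q n x by rewrite dual_pos_subN.
have cvg_e_cone u : le 0 u -> e_ n u @[n --> \oo] --> - limn (q^~ u).
  move=> u0; have [cvg_q p_cvg0 _] := pq_cvg u u0; under eq_fun do rewrite eE.
  by rewrite -sub0r; apply: cvgB.
pose L x := - limn (q^~ (lat_pos x)) + limn (q^~ (lat_neg x)).
have cvg_e x : e_ n x @[n --> \oo] --> L x.
  have -> : (fun n => e_ n x) = (fun n => e_ n (lat_pos x) - e_ n (lat_neg x)).
    by apply: funext => n; rewrite -dualB // -lat_pos_negE.
  have := cvgB (cvg_e_cone _ (lat_pos_ge0 x)) (cvg_e_cone _ (lat_neg_ge0 x)) _.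
  by rewrite opprK; apply.
have [C C0 e0C] := is_dual_bound (is_dual_comb 1 1 (is_dual_pos (he 0%N))
                                                    (is_dual_pos (is_dualN (he 0%N)))).
exists L => //; split.
  apply: (is_dual_cvg (C := 2 * C) he _ cvg_e) => n x.
  rewrite {1}(lat_pos_negE x) dualB //; apply: (lat_decomp_norm_le (ltW C0)) => u u0.
  have [_ _ /(_ n) pq_le0] := pq_cvg u u0.
  apply: le_trans (e0C u); apply: le_trans (ler_norm _); rewrite !mul1r eE ler_norml.
  by have := p_ge0 n u u0; have := q_ge0 n u u0; move: pq_le0; rewrite /p /q; lra.
move=> u u0 /=; rewrite (cvg_unique (@norm_hausdorff _ _) (cvg_e u) (cvg_e_cone u u0)).
have [cvg_q _ _] := pq_cvg u u0.
by rewrite oppr_le0; apply: limr_ge => //; apply: nearW => n; exact: q_ge0.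
Qed.

Section Substitution.
Variable F : (X -> R) -> \bar R.
Hypothesis Hprop : dual_proper F.
Hypothesis Hlsc : weakstar_lsc F.
Hypothesis Hsub : substitutable le F.

Lemma substitutable_ordered a b : is_dual a -> is_dual b -> dual_le le b a ->
  (F (fun x => (a x + b x) / 2)%R + F (fun x => (a x + b x) / 2)%R <= F b + F a)%E.
Proof.
move=> ha hb ba.
have hab : is_dual (a \- b) by apply: eq_is_dual (is_dual_comb 1 (-1) ha hb) => x /=; ring.
have pos_ab : dual_pos_part le (a \- b) (a \- b).
  split=> //; split=> [u _|]; first exact: lexx.
  by split=> [u u0|m _ abm _]; first by rewrite /= subr_ge0 ba.
have pos_ba : dual_pos_part le (b \- a) (fun=> 0).
  split; first by apply: eq_is_dual (is_dual_comb 0 0 ha ha) => x; rewrite !mul0r addr0.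
  by split=> [u u0|]; [rewrite /= subr_le0 ba | split=> [u _|m _ _ //]; exact: lexx].
have ht : is_dual (fun x => (a x - b x) / 2).
  by apply: eq_is_dual (is_dual_comb 2^-1 (- 2^-1) ha hb) => x; ring.
have t21_ge0 : dual_le le (fun=> 0) (fun x => (a x - b x) / 2).
  by move=> u /ba /=; lra.
have t21_le : dual_le le (fun x => (a x - b x) / 2) (a \- b).
  by move=> u /ba /=; lra.
have [t12 [ht12 [t12_0 [t12_le0 +]]]] := Hsub hb ha pos_ab pos_ba ht t21_ge0 t21_le.
have t12E : forall x, t12 x = 0.
  by apply: dual_cone_eq0 => // u u0; apply/le_anti; rewrite t12_le0 ?t12_0.
have -> : (fun x => b x + (a x - b x) / 2 - t12 x) = (fun x => (a x + b x) / 2).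
  by apply: funext => x; rewrite t12E; field.
have -> // : (fun x => a x - (a x - b x) / 2 + t12 x) = (fun x => (a x + b x) / 2).
by apply: funext => x; rewrite t12E; field.
Qed.

Section FixedSum.
Variable sg : X -> R.
Hypothesis hsg : is_dual sg.

Definition halfB (e : X -> R) x := (sg x - e x) / 2.
Definition halfD (e : X -> R) x := (sg x + e x) / 2.

Lemma is_dual_halfB e : is_dual e -> is_dual (halfB e).
Proof.
by move=> he; apply: eq_is_dual (is_dual_comb 2^-1 (- 2^-1) hsg he) => x; rewrite /halfB; ring.
Qed.

Lemma is_dual_halfD e : is_dual e -> is_dual (halfD e).
Proof.
by move=> he; apply: eq_is_dual (is_dual_comb 2^-1 2^-1 hsg he) => x; rewrite /halfD; ring.
Qed.

(* Substituting half of [e^+] turns the difference [e] into [e' = -e^- + 2 t12] with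
   [0 <= t12 <= e^-], hence [|e'| <= e^-]. *)
Lemma substitution_step e : is_dual e -> exists e', [/\ is_dual e',
  forall u, le 0 u -> dual_pos e' u + dual_pos (\- e') u <= dual_pos (\- e) u &
  (F (halfB e') + F (halfD e') <= F (halfB e) + F (halfD e))%E].
Proof.
move=> he; have hne := is_dualN he.
have pos_e : dual_pos_part le (halfD e \- halfB e) (dual_pos e).
  have -> : halfD e \- halfB e = e by apply: funext => x; rewrite /= /halfB /halfD; field.
  exact: dual_pos_partP.
have pos_ne : dual_pos_part le (halfB e \- halfD e) (dual_pos (\- e)).
  have -> : halfB e \- halfD e = \- e by apply: funext => x; rewrite /= /halfB /halfD; field.
  exact: dual_pos_partP.
have [hp [_ [p0 _]]] := pos_e.
have ht : is_dual (fun x => dual_pos e x / 2).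
  by apply: eq_is_dual (is_dual_comb 2^-1 0 hp hp) => x; ring.
have t21_ge0 : dual_le le (fun=> 0) (fun x => dual_pos e x / 2).
  by move=> u /p0 /=; lra.
have t21_le : dual_le le (fun x => dual_pos e x / 2) (dual_pos e).
  by move=> u /p0 /=; lra.
have [t12 [ht12 [t12_0 [t12_le hF]]]] :=
  Hsub (is_dual_halfB he) (is_dual_halfD he) pos_e pos_ne ht t21_ge0 t21_le.
pose e' x := e x - dual_pos e x + 2 * t12 x.
have he' : is_dual e'.
  by apply: eq_is_dual (is_dual_comb 1 2 (is_dual_comb 1 (-1) he hp) ht12) => x; rewrite /e'; ring.
exists e'; split=> // [u u0|].
  apply: dual_pos_abs_le => // [|y y0]; first exact: is_dual_pos.
  have := dual_pos_subN y he; have := t12_0 y y0; have := t12_le y y0.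
  by rewrite /= /e'; lra.
have -> : halfB e' = (fun x => halfB e x + dual_pos e x / 2 - t12 x).
  by apply: funext => x; rewrite /halfB /e'; field.
have -> // : halfD e' = (fun x => halfD e x - dual_pos e x / 2 + t12 x).
by apply: funext => x; rewrite /halfD /e'; field.
Qed.

Lemma substitution_iterates e0 : is_dual e0 ->
  exists e_ : nat -> X -> R, [/\ forall n, is_dual (e_ n),
  forall n u, le 0 u -> dual_pos (e_ n.+1) u + dual_pos (\- e_ n.+1) u <= dual_pos (\- e_ n) u &
  forall n, (F (halfB (e_ n)) + F (halfD (e_ n)) <= F (halfB e0) + F (halfD e0))%E].
Proof.
move=> he0; have /choice[next next_spec] : forall e, exists e', is_dual e -> [/\ is_dual e',
    forall u, le 0 u -> dual_pos e' u + dual_pos (\- e') u <= dual_pos (\- e) u &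
    (F (halfB e') + F (halfD e') <= F (halfB e) + F (halfD e))%E].
  move=> e; case: (pselect (is_dual e)) => [he|]; last by exists e.
  by have [e' ?] := substitution_step he; exists e'.
have he_ n : is_dual (iter n next e0) by elim: n => //= n IH; case: (next_spec _ IH).
exists (fun n => iter n next e0); split=> // [n u u0|n].
  by case: (next_spec _ (he_ n)) => _ + _; apply.
elim: n => //= n IH; case: (next_spec _ (he_ n)) => _ _ Fn.
exact: le_trans Fn IH.
Qed.

End FixedSum.

Lemma substitutable_midpoint mu1 mu2 : is_dual mu1 -> is_dual mu2 ->
  (F (fun x => (mu1 x + mu2 x) / 2)%R + F (fun x => (mu1 x + mu2 x) / 2)%R
     <= F mu1 + F mu2)%E.
Proof.
move=> h1 h2; pose sg x := mu1 x + mu2 x; pose e0 x := mu2 x - mu1 x.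
have hsg : is_dual sg by apply: eq_is_dual (is_dual_comb 1 1 h1 h2) => x; rewrite /sg; ring.
have he0 : is_dual e0 by apply: eq_is_dual (is_dual_comb 1 (-1) h2 h1) => x; rewrite /e0; ring.
have [e_ [he_ shrink F_le]] := substitution_iterates hsg he0.
have halfB0 : halfB sg e0 = mu1 by apply: funext => x; rewrite /halfB /sg /e0; field.
have halfD0 : halfD sg e0 = mu2 by apply: funext => x; rewrite /halfD /sg /e0; field.
rewrite halfB0 halfD0 in F_le.
have [L [hL L_le0] e_cvg] := shrinking_duals_cvg he_ shrink.
have cvg_halfB x : halfB sg (e_ n) x @[n --> \oo] --> halfB sg L x.
  by apply: cvgMr_tmp; apply: cvgB => //; exact: cvg_cst.
have cvg_halfD x : halfD sg (e_ n) x @[n --> \oo] --> halfD sg L x.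
  by apply: cvgMr_tmp; apply: cvgD => //; exact: cvg_cst.
have lim_le := weakstar_lsc_addF_le Hprop Hlsc (fun n => is_dual_halfB hsg (he_ n))
  (fun n => is_dual_halfD hsg (he_ n)) (is_dual_halfB hsg hL) (is_dual_halfD hsg hL)
  cvg_halfB cvg_halfD F_le.
have halfDB : dual_le le (halfD sg L) (halfB sg L).
  by move=> u /L_le0 /=; rewrite /halfB /halfD; lra.
have := substitutable_ordered (is_dual_halfB hsg hL) (is_dual_halfD hsg hL) halfDB.
have -> : (fun x => (halfB sg L x + halfD sg L x) / 2) = (fun x => (mu1 x + mu2 x) / 2).
  by apply: funext => x; rewrite /halfB /halfD /sg; field.
by move/le_trans; apply; rewrite addeC.
Qed.

End Substitution.

End BanachLattice.

Theorem proposition2p35 (R : realType) (X : completeNormedModType R)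
  (le : X -> X -> Prop) (meet join : X -> X -> X) (F : (X -> R) -> \bar R) :
  banach_lattice le meet join ->
  dual_proper F -> weakstar_lsc F -> substitutable le F ->
  dual_convex F.
Proof.
move=> [Hvl Hnorm] Hprop Hlsc Hsub; apply: (midpoint_convex_lsc Hprop Hlsc).
exact: (substitutable_midpoint Hvl Hnorm Hprop Hlsc Hsub).
Qed.
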